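(* Let $G$ be a graph of order $n$, not isomorphic to the complete graph $K_n$, such that $\tau(G)=\tau>\frac{n}{2}$. Then $\tau\le\beta_p(G)\le\frac{n+\tau}{2}$. Moreover, if $W$ is its $\tau$-set, then (1) $\beta_p(G)=\tau$ if and only if $G[W]\cong\overline{K_\tau}$; and (2) $\tau<\beta_p(G)\le\frac{n+\tau}{2}$ if and only if $G[W]\cong K_\tau$.
   Context: All graphs are finite, simple, undirected and connected. Two vertices $u,v$ are twins if $N(u)\setminus\{v\}=N(v)\setminus\{u\}$; twin classes are the equivalence classes of this relation, and the twin number $\tau(G)$ is the maximum cardinality of a twin class. A twin set is a set of pairwise twin vertices; a $\tau$-set is a twin set of cardinality $\tau(G)$ (it is unique when $\tau(G)>n/2$). $G[W]$ is the induced subgraph. For a partition $\Pi=\{S_1,\dots,S_k\}$ of $V(G)$, $r(u|\Pi)=(d(u,S_1),\dots,d(u,S_k))$ with $d(u,S)=\min_{w\in S}d(u,w)$; $\Pi$ is locating if $r(u|\Pi)\ne r(v|\Pi)$ for all distinct $u,v$; $\beta_p(G)$ is the minimum size of a locating partition. *)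

From mathcomp Require Import all_boot.
Set Implicit Arguments. Unset Strict Implicit. Unset Printing Implicit Defensive.

Section Graph.
Variable T : finType.
Variable e : rel T.

Definition simple_graph : Prop := irreflexive e /\ symmetric e.
Definition connected_graph : Prop := forall u v : T, connect e u v.

Fixpoint within (k : nat) (u v : T) : bool :=
  match k with
  | 0 => u == v
  | k'.+1 => within k' u v || [exists w, within k' u w && e w v]
  end.

(* graph distance (for connected graphs it is < #|T|) *)
Definition dist (u v : T) : nat := find (fun k => within k u v) (iota 0 #|T|).

Definition dist_set (u : T) (S : {set T}) : nat :=
  \big[minn/#|T|]_(w in S) dist u w.

Definition nbhd (u : T) : {set T} := [set w | e u w].

Definition twins (u v : T) : bool := (nbhd u :\ v) == (nbhd v :\ u).

Definition twin_class (u : T) : {set T} := [set v | twins u v].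

Definition twin_number : nat := \max_(u : T) #|twin_class u|.

Definition twin_set (W : {set T}) : Prop :=
  forall u v, u \in W -> v \in W -> twins u v.

(* locating partition: a partition of V(G) such that the vectors of
   distances r(u|Pi) are pairwise distinct, i.e. any two distinct vertices
   are at different distance from some part *)
Definition locating_partition (P : {set {set T}}) : bool :=
  partition P [set: T] &&
  [forall u, forall v, (u != v) ==> [exists S in P, dist_set u S != dist_set v S]].

(* partition dimension: minimum size of a locating partition
   (the singleton partition is always locating, so #|T| is a valid default) *)
Definition partition_dim : nat :=
  \big[minn/#|T|]_(P : {set {set T}} | locating_partition P) #|P|.

(* G[W] is isomorphic to the edgeless graph on |W| vertices *)
Definition induced_edgeless (W : {set T}) : Prop :=
  forall u v, u \in W -> v \in W -> ~~ e u v.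

(* G[W] is isomorphic to the complete graph on |W| vertices *)
Definition induced_complete (W : {set T}) : Prop :=
  forall u v, u \in W -> v \in W -> u != v -> e u v.

Definition complete_graph : Prop := forall u v : T, u != v -> e u v.

End Graph.

From mathcomp Require Import all_boot all_order zify.
Set Implicit Arguments. Unset Strict Implicit. Unset Printing Implicit Defensive.

(* Twins are at the same distance from every set containing neither of them, so the
   vertices of the tau-set W lie in pairwise distinct parts of any locating partition,
   whence tau <= beta_p.  Being a twin set, W induces either an edgeless graph or a
   clique, and since tau > n/2 the vertices outside W can be matched injectively into
   W minus one vertex a.
   If W is edgeless, merging each outside vertex with its partner gives a locating
   partition with tau parts: a vertex that no part separates from its partner would be
   a twin of it, against the maximality of W.
   If W is a clique, connectivity gives an outside vertex x0 adjacent to W; in a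
   partition with tau parts, x0 and the vertex of W in its part are within distance 1
   of every part, so tau < beta_p.  For the upper bound, Ore's argument (the complement
   of a minimal dominating set is dominating) lets one merge at least half of the
   outside vertices with their partners, each of those adjacent to W being separated
   from its partner by a singleton part; this gives 2 beta_p <= n + tau. *)

Section Distances.
Variables (T : finType) (e : rel T).

Lemma within_refl k u : within e k u u.
Proof. by elim: k => [|k IH] /=; rewrite ?eqxx ?IH. Qed.

Lemma within1 u v : within e 1 u v = (u == v) || e u v.
Proof.
congr (_ || _); apply/existsP/idP => [[w /andP[/eqP-> ->]]//|uv].
by exists u; rewrite eqxx uv.
Qed.

Lemma within_leq i j u v : i <= j -> within e i u v -> within e j u v.
Proof.
move/subnK <-; elim: (j - i) => [//|k IH] /IH.
by rewrite addSn /= => ->.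
Qed.

Lemma dist_leq k u v : k < #|T| -> (dist e u v <= k) = within e k u v.
Proof.
move=> lt_k_n; rewrite /dist; set p := fun k => within e k u v.
apply/idP/idP => [le_dk|pk].
  have has_p : has p (iota 0 #|T|) by rewrite has_find size_iota (leq_ltn_trans le_dk).
  have := nth_find 0 has_p; rewrite nth_iota ?add0n; first exact: within_leq.
  by rewrite -[X in _ < X](size_iota 0) -has_find.
rewrite leqNgt; apply/negP => /(before_find 0).
by rewrite nth_iota // add0n /p pk.
Qed.

Lemma dist_set_leq k u (S : {set T}) : k < #|T| ->
  (dist_set e u S <= k) = [exists w in S, within e k u w].
Proof.
move=> lt_k_n; rewrite leqNgt; apply/negP/idP => [far|/exists_inP[w wS uw]].
  apply: contra_notT far => /exists_inPn none; apply/(@Order.TotalTheory.bigmin_gtP _ nat).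
  by split=> // w /none; rewrite ltEnat /= ltnNge dist_leq.
case/(@Order.TotalTheory.bigmin_gtP _ nat) => _ /(_ w wS).
by rewrite ltEnat /= ltnNge dist_leq // uw.
Qed.

Lemma dist_set_eq0 u (S : {set T}) : (dist_set e u S == 0) = (u \in S).
Proof.
have n_gt0 : 0 < #|T| by apply/card_gt0P; exists u.
rewrite -leqn0 dist_set_leq //; apply/exists_inP/idP => [[w wS /eqP-> //]|uS].
by exists u; rewrite ?within_refl.
Qed.

Lemma dist_set_leq1 u (S : {set T}) : 1 < #|T| ->
  (dist_set e u S <= 1) = [exists w in S, (u == w) || e u w].
Proof.
by move=> n_gt1; rewrite dist_set_leq //; apply: eq_existsb => w; rewrite within1.
Qed.

Lemma dist_set1_leq1 u a : 1 < #|T| ->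
  (dist_set e u [set a] <= 1) = (u == a) || e u a.
Proof.
move=> n_gt1; rewrite dist_set_leq1 //.
by apply/exists_inP/idP => [[w /set1P-> //]|ua]; exists a; rewrite ?set11.
Qed.

Lemma dist_set2_leq1 u a b : 1 < #|T| ->
  (dist_set e u [set a; b] <= 1) = ((u == a) || e u a) || ((u == b) || e u b).
Proof.
move=> n_gt1; rewrite dist_set_leq1 //; apply/exists_inP/idP.
  by case=> w /set2P[]-> ->; rewrite ?orbT.
by case/orP=> [ua|ub]; [exists a; rewrite ?set21 | exists b; rewrite ?set22].
Qed.

End Distances.

Section Twins.
Variables (T : finType) (e : rel T).
Hypotheses (e_irr : irreflexive e) (e_sym : symmetric e).

Lemma twinsP u v :
  reflect (forall x, x != u -> x != v -> e u x = e v x) (twins e u v).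
Proof.
apply: (iffP eqP) => [Nuv x xu xv|Nuv].
  by have := congr1 (fun A : {set T} => x \in A) Nuv; rewrite /= !inE xu xv.
apply/setP => x; rewrite !inE.
have [->|xu] := eqVneq x u; first by rewrite e_irr andbF.
have [->|xv] := eqVneq x v; first by rewrite e_irr.
by rewrite Nuv.
Qed.

Lemma twins_sym u v : twins e u v -> twins e v u.
Proof. by move/twinsP => Nuv; apply/twinsP => x xv xu; rewrite Nuv. Qed.

Lemma twins_trans a b c : twins e a b -> twins e b c -> twins e a c.
Proof.
move=> /twinsP Nab /twinsP Nbc; apply/twinsP => x xa xc.
have [xb|xb] := eqVneq x b; last by rewrite Nab // Nbc.
subst x; have [<-|ac] := eqVneq a c; first by [].
have eba : e b a = e c a by apply: Nbc; rewrite // eq_sym.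
have eac : e a c = e b c by apply: Nab; rewrite eq_sym.
by rewrite e_sym eba e_sym eac e_sym.
Qed.

Lemma twins_within k u v z :
  twins e u v -> z != u -> within e k u z -> within e k v z.
Proof.
move=> /twinsP Nuv; elim: k z => [|k IH] z zu /=; first by rewrite eq_sym (negbTE zu).
case/orP => [/IH-> //|/exists_inP[w uw wz]].
have [wu|wu] := eqVneq w u; last first.
  by apply/orP; right; apply/exists_inP; exists w; rewrite ?IH.
subst w; have [->|zv] := eqVneq z v; first by rewrite within_refl.
by apply/orP; right; apply/exists_inP; exists v; rewrite ?within_refl -?Nuv.
Qed.

Lemma twins_dist_set u v (S : {set T}) :
  twins e u v -> u \notin S -> v \notin S -> dist_set e u S = dist_set e v S.
Proof.
move=> tuv uS vS; apply: eq_bigr => z zS.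
have zu : z != u by apply: contraNneq uS => <-.
have zv : z != v by apply: contraNneq vS => <-.
apply: eq_find => k; apply/idP/idP; first exact: twins_within.
by apply: twins_within => //; apply: twins_sym.
Qed.

Lemma twin_set_edge_out (W : {set T}) w w' y : twin_set e W ->
  w \in W -> w' \in W -> y \notin W -> e w y = e w' y.
Proof.
move=> tW wW w'W yW.
by apply/(twinsP _ _ (tW w w' wW w'W)); apply: contraNneq yW => ->.
Qed.

Lemma twin_set_edge_in (W : {set T}) a b u v : twin_set e W ->
  a \in W -> b \in W -> a != b -> u \in W -> v \in W -> u != v -> e u v = e a b.
Proof.
move=> tW aW bW ab uW vW uv.
have shift x y y' : x \in W -> y \in W -> y' \in W -> y != x -> y' != x -> e x y = e x y'.
  move=> xW yW y'W yx y'x; have [<- //|yy'] := eqVneq y y'.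
  by rewrite !(e_sym x); apply/(twinsP _ _ (tW y y' yW y'W)); rewrite // eq_sym.
have [ua|ua] := eqVneq u a.
  by subst u; apply: shift; rewrite // eq_sym.
have euv : e u v = e u a by apply: shift; rewrite // eq_sym.
have eau : e a u = e a b by apply: shift; rewrite // eq_sym.
by rewrite euv e_sym eau.
Qed.

Lemma twin_class_card u : #|twin_class e u| <= twin_number e.
Proof. exact: (@leq_bigmax _ (fun u => #|twin_class e u|)). Qed.

Lemma max_twin_set_closed (W : {set T}) w z : twin_set e W ->
  #|W| = twin_number e -> w \in W -> twins e w z -> z \in W.
Proof.
move=> tW cW wW twz.
have sub : W \subset twin_class e w by apply/subsetP => x xW; rewrite inE tW.
suff -> : W = twin_class e w by rewrite inE.
by apply/eqP; rewrite eqEcard sub cW twin_class_card.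
Qed.

Lemma exists_max_twin_set : 0 < #|T| ->
  exists W : {set T}, twin_set e W /\ #|W| = twin_number e.
Proof.
move=> n_gt0; have [u0 max_u0] := eq_bigmax (fun u => #|twin_class e u|) n_gt0.
exists (twin_class e u0); split; last by rewrite /twin_number max_u0.
move=> x y; rewrite !inE => u0x u0y.
exact: twins_trans (twins_sym u0x) u0y.
Qed.

End Twins.

Section LocatingPartitions.
Variables (T : finType) (e : rel T).
Hypothesis e_irr : irreflexive e.

Lemma partition_pblock_mem (P : {set {set T}}) u v S : partition P [set: T] ->
  pblock P u = pblock P v -> S \in P -> (u \in S) = (v \in S).
Proof.
move=> /and3P[/eqP covP tiP _] Puv SP.
have coverP x : x \in cover P by rewrite covP inE.
apply/idP/idP => xS; rewrite -(def_pblock tiP SP xS).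
  by rewrite Puv mem_pblock.
by rewrite -Puv mem_pblock.
Qed.

Lemma locating_twins_pblock (P : {set {set T}}) u v : locating_partition e P ->
  twins e u v -> u != v -> pblock P u != pblock P v.
Proof.
case/andP=> partP /forallP/(_ u)/forallP/(_ v)/implyP locP tuv uv.
apply/eqP => Puv; have /exists_inP[S SP] := locP uv; apply/negP; rewrite negbK.
have uS_vS := partition_pblock_mem partP Puv SP.
case uS: (u \in S).
  have u0 : dist_set e u S == 0 by rewrite dist_set_eq0.
  have v0 : dist_set e v S == 0 by rewrite dist_set_eq0 -uS_vS.
  by rewrite (eqP u0) (eqP v0).
by rewrite (twins_dist_set e_irr tuv) ?eqxx // -?uS_vS uS.
Qed.

Lemma locating_twin_set_card (P : {set {set T}}) (W : {set T}) :
  locating_partition e P -> twin_set e W -> #|W| <= #|P|.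
Proof.
move=> locP tW; have /and3P[/eqP covP _ _] := proj1 (andP locP).
rewrite -(@card_in_imset _ _ (pblock P)); last first.
  move=> u v uW vW; apply: contra_eq => uv.
  exact: locating_twins_pblock (tW u v uW vW) uv.
apply/subset_leq_card/subsetP => _ /imsetP[u _ ->].
by apply: pblock_mem; rewrite covP inE.
Qed.

Lemma partition_dim_le (P : {set {set T}}) :
  locating_partition e P -> partition_dim e <= #|P|.
Proof. by move=> locP; apply: (@Order.TotalTheory.bigmin_inf _ nat _ _ _ _ _ _ locP). Qed.

Lemma twin_set_card_le_partition_dim (W : {set T}) :
  twin_set e W -> #|W| <= partition_dim e.
Proof.
move=> tW; apply/(@Order.TotalTheory.bigmin_geP _ nat); split; first exact: max_card.
by move=> P locP; apply: locating_twin_set_card.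
Qed.

Definition fiber (lab : T -> T) z := [set y in [set: T] | lab z == lab y].

Lemma preim_partition_locating (lab : T -> T) :
  (forall u v, u != v -> lab u = lab v ->
     exists z, dist_set e u (fiber lab z) != dist_set e v (fiber lab z)) ->
  locating_partition e (preim_partition lab [set: T]).
Proof.
move=> sep; rewrite /locating_partition preim_partitionP.
apply/forallP => u; apply/forallP => v; apply/implyP => uv.
have fiberP z : fiber lab z \in preim_partition lab [set: T] by apply: imset_f; rewrite inE.
have [luv|luv] := eqVneq (lab u) (lab v).
  by have [z sep_z] := sep u v uv luv; apply/exists_inP; exists (fiber lab z).
apply/exists_inP; exists (fiber lab u) => //.
apply: contra_neq luv => duv.
have : dist_set e v (fiber lab u) == 0 by rewrite -duv dist_set_eq0 !inE eqxx.
by rewrite dist_set_eq0 !inE => /eqP.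
Qed.

Lemma card_preim_partition (lab : T -> T) :
  #|preim_partition lab [set: T]| <= #|lab @: [set: T]|.
Proof.
rewrite [preim_partition _ _](_ : _ =
    [set [set y in [set: T] | k == lab y] | k in lab @: [set: T]]).
  exact: leq_imset_card.
by rewrite -imset_comp.
Qed.

End LocatingPartitions.

Lemma card_le_injection (T : finType) (A B : {set T}) : #|A| <= #|B| ->
  exists2 f : T -> T, {in A, forall x, f x \in B} & {in A &, injective f}.
Proof.
have [->|[b bB]] := set_0Vmem B => le_AB.
  by move: le_AB; rewrite cards0 leqn0 cards_eq0 => /eqP->; exists id => x; rewrite inE.
have idx_lt x : x \in A -> index x (enum A) < size (enum B).
  by move=> xA; rewrite -cardE (leq_trans _ le_AB) // cardE index_mem mem_enum.
exists (fun x => nth b (enum B) (index x (enum A))).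
  by move=> x xA; rewrite -mem_enum mem_nth ?idx_lt.
move=> x y xA yA /eqP; rewrite nth_uniq ?enum_uniq ?idx_lt // => /eqP idx_xy.
by rewrite -(nth_index x (_ : x \in enum A)) ?mem_enum // idx_xy nth_index ?mem_enum.
Qed.

Section HalfDominatedSplit.
Variables (T : finType) (h : rel T) (needy : pred T) (R : {set T}).
Hypotheses (h_sym : symmetric h) (h_irr : irreflexive h).
Hypothesis needy_nbr : {in R, forall x, needy x -> exists2 y, y \in R & h x y}.

Definition dominating (D : {set T}) :=
  (D \subset R) && [forall x in R :\: D, needy x ==> [exists y in D, h x y]].

Lemma minimal_dominating_nbr_out (D : {set T}) : dominating D ->
  (forall D', dominating D' -> #|D| <= #|D'|) ->
  {in D, forall v, needy v -> exists2 y, y \in R :\: D & h v y}.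
Proof.
move=> /andP[DR /forall_inP domD] minD v vD Nv.
have [/exists_inP[y yRD hvy]|no_out] := boolP [exists y in R :\: D, h v y].
  by exists y.
suff /minD : dominating (D :\ v) by rewrite [#|D|](cardsD1 v) vD ltnn.
apply/andP; split; first by rewrite (subset_trans (subsetDl D _)).
apply/forall_inP => x; rewrite !inE negb_and negbK => /andP[/orP[/eqP-> | xD] xR].
  have [y yR hvy] := needy_nbr (subsetP DR v vD) Nv; apply/implyP => _.
  have yv : y != v by apply: contraTneq hvy => ->; rewrite h_irr.
  apply/exists_inP; exists y => //; rewrite !inE yv /=.
  by apply: contraNT no_out => yD; apply/exists_inP; exists y; rewrite // !inE yD.
have xRD : x \in R :\: D by rewrite !inE xD.
apply/implyP => Nx; have /exists_inP[y yD hxy] := implyP (domD x xRD) Nx.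
apply/exists_inP; exists y => //; rewrite !inE yD andbT.
by apply: contraNneq no_out => yv; apply/exists_inP; exists x; rewrite // h_sym -yv.
Qed.

Lemma half_dominated_split : exists X : {set T},
  [/\ X \subset R, 2 * #|R :\: X| <= #|R| &
      {in X, forall x, needy x -> exists2 y, y \in R :\: X & h x y}].
Proof.
have domR : dominating R.
  by rewrite /dominating subxx; apply/forall_inP => x; rewrite setDv inE.
case: (@arg_minnP _ R dominating (fun D => #|D|) domR) => D domD minD.
have [DR /forall_inP domRD] := andP domD.
have RD_D : R :\: (R :\: D) = D by rewrite setDDr setDv set0U (setIidPr DR).
have := cardsID D R; rewrite (setIidPr DR) => card_R.
have [small|big] := leqP (2 * #|D|) #|R|.
  exists (R :\: D); split; rewrite ?subsetDl ?RD_D // => x xRD Nx.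
  by have /exists_inP[y] := implyP (domRD x xRD) Nx; exists y.
exists D; split => //; first by lia.
exact: minimal_dominating_nbr_out.
Qed.

End HalfDominatedSplit.

Lemma connected_boundary_edge (T : finType) (e : rel T) (A : {set T}) u v :
  connected_graph e -> u \in A -> v \notin A ->
  exists x y, [/\ x \in A, y \notin A & e x y].
Proof.
move=> conn_e uA vA; have [p pathp v_last] := connectP (conn_e u v).
elim: p u uA pathp v_last => [|y p IH] x xA /=; first by move=> _ vx; rewrite vx xA in vA.
case/andP=> exy pathp; have [yA|yA] := boolP (y \in A); first exact: IH pathp.
by move=> _; exists x, y.
Qed.

Section MaxTwinSet.
Variables (T : finType) (e : rel T) (W : {set T}) (a b : T).
Hypotheses (e_irr : irreflexive e) (e_sym : symmetric e).
Hypotheses (tW : twin_set e W) (cW : #|W| = twin_number e).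
Hypotheses (aW : a \in W) (bW : b \in W) (ab : a != b).
Hypothesis small_compl : #|~: W| < #|W|.

Let n_gt1 : 1 < #|T|.
Proof. by apply/card_gt1P; exists a, b. Qed.

Let edge_in u v : u \in W -> v \in W -> u != v -> e u v = e a b.
Proof. exact: (twin_set_edge_in e_irr e_sym tW aW bW ab). Qed.

Let edge_out w y : w \in W -> y \notin W -> e w y = e a y.
Proof. by move=> wW; exact: (twin_set_edge_out e_irr tW wW aW). Qed.

Section Pairing.
Variables (X : {set T}) (f : T -> T).
Hypotheses (XW : X \subset ~: W) (fW : {in ~: W, forall x, f x \in W :\ a}).
Hypothesis f_inj : {in ~: W &, injective f}.

Definition pair_label x := if x \in X then f x else x.

Let X_compl x : x \in X -> x \in ~: W := subsetP XW x.

Lemma fiber_pair_label_a : fiber pair_label a = [set a].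
Proof.
have aX : a \notin X by apply: contraL aW => /X_compl; rewrite inE.
apply/setP => t; rewrite !inE /pair_label (negbTE aX).
case: ifP => [/X_compl tcW|_]; last by rewrite eq_sym.
have /setD1P[fta _] := fW tcW.
have ta : (t == a) = false by apply: contraTF tcW => /eqP->; rewrite inE aW.
by rewrite eq_sym (negbTE fta) ta.
Qed.

Lemma fiber_pair_label_out y : y \notin W -> y \notin X -> fiber pair_label y = [set y].
Proof.
move=> yW yX; apply/setP => t; rewrite !inE /pair_label (negbTE yX) /=.
case: ifP => [tX|_]; last by rewrite eq_sym.
have /setD1P[_ ftW] := fW (X_compl tX).
have yft : (y == f t) = false by apply: contraNF yW => /eqP->.
have ty : (t == y) = false by apply: contraTF tX => /eqP->.
by rewrite yft ty.
Qed.

Lemma fiber_pair_label_in y : y \in X -> fiber pair_label y = [set f y; y].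
Proof.
move=> yX; have ycW := X_compl yX; have /setD1P[_ fyW] := fW ycW.
apply/setP => t; rewrite !inE /pair_label yX.
case: ifP => tX.
  have tnW : t \notin W by rewrite -in_setC X_compl.
  have tfy : (t == f y) = false by apply: contraNF tnW => /eqP->.
  by rewrite (inj_in_eq f_inj) ?X_compl // tfy eq_sym.
have ty : (t == y) = false by apply: contraFF tX => /eqP->.
by rewrite ty orbF eq_sym.
Qed.

Lemma pairing_partition_dim :
  {in X, forall x, exists z,
     dist_set e (f x) (fiber pair_label z) != dist_set e x (fiber pair_label z)} ->
  partition_dim e <= #|W| + #|~: W :\: X|.
Proof.
move=> sep.
have locP : locating_partition e (preim_partition pair_label [set: T]).
  apply: preim_partition_locating => u v uv; rewrite /pair_label.
  case: ifP => uX; case: ifP => vX.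
  - by move/(f_inj (X_compl uX) (X_compl vX))/eqP; rewrite (negbTE uv).
  - by move=> fuv; have [z sep_z] := sep u uX; exists z; rewrite -fuv eq_sym.
  - by move=> ufv; have [z sep_z] := sep v vX; exists z; rewrite ufv.
  - by move/eqP; rewrite (negbTE uv).
apply: leq_trans (partition_dim_le locP) _; apply: leq_trans (card_preim_partition _) _.
have labels : pair_label @: [set: T] \subset W :|: (~: W :\: X).
  apply/subsetP => _ /imsetP[x _ ->]; rewrite /pair_label !inE.
  case: ifP => xX; first by have /setD1P[_ ->] := fW (X_compl xX).
  by rewrite xX; case: (x \in W).
by apply: leq_trans (subset_leq_card labels) _; rewrite cardsU leq_subr.
Qed.

End Pairing.

Let pairing_map : exists2 f : T -> T,
  {in ~: W, forall x, f x \in W :\ a} & {in ~: W &, injective f}.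
Proof.
apply: card_le_injection; have := cardsD1 a W; rewrite aW.
by move: small_compl; lia.
Qed.

Lemma edgeless_partition_dim : ~~ e a b -> partition_dim e <= #|W|.
Proof.
move=> nab; have [f fW f_inj] := pairing_map.
have := pairing_partition_dim (subxx _) fW f_inj; rewrite setDv cards0 addn0; apply.
move=> x xcW; set lab := pair_label (~: W) f.
have [/existsP // | /existsPn same] :=
  boolP [exists z, dist_set e (f x) (fiber lab z) != dist_set e x (fiber lab z)].
have near z : (dist_set e (f x) (fiber lab z) <= 1) = (dist_set e x (fiber lab z) <= 1).
  by have := same z; rewrite negbK => /eqP->.
have /setD1P[fxa fxW] := fW x xcW; have xW : x \notin W by rewrite -in_setC.
have no_edge u v : u \in W -> v \in W -> u != v -> e u v = false.
  by move=> uW vW uv; rewrite edge_in // (negbTE nab).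
have xa : e x a = false.
  have := near a; rewrite fiber_pair_label_a // !dist_set1_leq1 // (negbTE fxa).
  by rewrite no_edge // => /esym/norP[_ /negbTE].
have x_W y : y \in W -> e x y = false by move=> yW; rewrite e_sym edge_out // e_sym.
suff /(max_twin_set_closed tW cW fxW) : twins e (f x) x by rewrite (negbTE xW).
apply/(twinsP e_irr) => y yfx yx; have [yW|yW] := boolP (y \in W).
  by rewrite no_edge ?x_W // eq_sym.
have ycW : y \in ~: W by rewrite inE.
have /setD1P[_ fyW] := fW y ycW.
have fxfy : (f x == f y) = false by rewrite (inj_in_eq f_inj) // eq_sym (negbTE yx).
have fxy : (f x == y) = false by apply: contraNF yW => /eqP<-.
have xfy : (x == f y) = false by apply: contraNF xW => /eqP->.
have xy : (x == y) = false by rewrite eq_sym (negbTE yx).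
have := near y; rewrite fiber_pair_label_in // !dist_set2_leq1 //.
by rewrite fxfy no_edge ?fxfy ?fyW // fxy xfy xy x_W.
Qed.

Let compl_nbr x : e a b -> x \in ~: W -> e a x ->
  exists2 y, y \in ~: W & (x != y) && (e x y != e a y).
Proof.
move=> eab xcW ax; have xW : x \notin W by rewrite -in_setC.
have [/existsP[y /and3P[ya yx ay_xy]] | /existsPn same] :=
  boolP [exists y, [&& y != a, y != x & e a y != e x y]].
  exists y; last by rewrite eq_sym yx eq_sym.
  rewrite inE; apply: contra ay_xy => yW.
  have eay : e a y = e a b by apply: edge_in; rewrite // eq_sym.
  have exy : e x y = e a x by rewrite e_sym edge_out.
  by rewrite eay exy ax eab.
suff /(max_twin_set_closed tW cW aW) : twins e a x by rewrite (negbTE xW).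
apply/(twinsP e_irr) => y ya yx.
by have := same y; rewrite ya yx /= negbK => /eqP.
Qed.

Lemma clique_partition_dim_le : e a b -> 2 * partition_dim e <= #|T| + #|W|.
Proof.
move=> eab; have [f fW f_inj] := pairing_map.
(* For x adjacent to W, [h x y] says that the singleton {y} separates x from every
   vertex of W; the disjunction only serves to make [h] symmetric. *)
pose h x y := [&& x != y, e a x || e a y & e x y != e a x && e a y].
have h_sym : symmetric h.
  by move=> x y; rewrite /h eq_sym (e_sym x) (orbC (e a x)) (andbC (e a x)).
have h_irr : irreflexive h by move=> x; rewrite /h eqxx.
have needy_nbr : {in ~: W, forall x, e a x -> exists2 y, y \in ~: W & h x y}.
  move=> x xcW ax; have [y ycW /andP[xy exy]] := compl_nbr eab xcW ax.
  by exists y; rewrite // /h xy ax.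
have [X [XW half dom]] := half_dominated_split h_sym h_irr needy_nbr.
set lab := pair_label X f.
have sep : {in X, forall x, exists z,
    dist_set e (f x) (fiber lab z) != dist_set e x (fiber lab z)}.
  move=> x xX; have xcW := subsetP XW x xX; have xW : x \notin W by rewrite -in_setC.
  have /setD1P[fxa fxW] := fW x xcW.
  have xa : (x == a) = false by apply: contraNF xW => /eqP->.
  have [ax|nax] := boolP (e a x).
    have [y /setDP[ycX ycW] /and3P[xy _ hxy]] := dom x xX ax.
    have yW : y \notin W by rewrite -in_setC.
    have fxy : (f x == y) = false by apply: contraNF yW => /eqP<-.
    exists y; apply/eqP => /(congr1 (leq^~ 1)).
    rewrite fiber_pair_label_out // !dist_set1_leq1 // fxy (negbTE xy) edge_out //= => eq_y.
    by rewrite ax -eq_y eqxx in hxy.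
  exists a; apply/eqP => /(congr1 (leq^~ 1)).
  rewrite fiber_pair_label_a // !dist_set1_leq1 // (negbTE fxa) xa (edge_in fxW aW fxa).
  by rewrite eab e_sym (negbTE nax).
have := pairing_partition_dim XW fW f_inj sep.
by have := cardsC W; move: half; lia.
Qed.

Let clique_locating_card_neq x0 (P : {set {set T}}) : e a b -> x0 \notin W -> e a x0 ->
  locating_partition e P -> #|W| != #|P|.
Proof.
move=> eab x0W ax0 locP; apply/eqP => card_WP.
have [partP /forallP sepP] := andP locP; have /and3P[/eqP covP _ _] := partP.
have PP x : pblock P x \in P by rewrite pblock_mem // covP inE.
have blocks : pblock P @: W = P.
  apply/eqP; rewrite eqEcard card_in_imset ?card_WP ?leqnn ?andbT.
    by apply/subsetP => _ /imsetP[w _ ->].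
  move=> u v uW vW; apply: contra_eq => uv.
  by apply: (locating_twins_pblock e_irr locP) uv; apply: tW.
have /imsetP[w wW Px0w] : pblock P x0 \in pblock P @: W by rewrite blocks.
have x0w : x0 != w by apply: contraNneq x0W => ->.
have /exists_inP[S SP] := implyP (forallP (sepP x0) w) x0w; apply/negP; rewrite negbK.
have /imsetP[w' w'W ->] : S \in pblock P @: W by rewrite blocks.
have near_x0 : dist_set e x0 (pblock P w') <= 1.
  rewrite dist_set_leq1 //; apply/exists_inP; exists w'; rewrite ?mem_pblock ?covP ?inE //.
  by rewrite e_sym edge_out // ax0 orbT.
have near_w : dist_set e w (pblock P w') <= 1.
  rewrite dist_set_leq1 //; apply/exists_inP; exists w'; rewrite ?mem_pblock ?covP ?inE //.
  by have [//|ww'] := eqVneq w w'; rewrite edge_in.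
have : (dist_set e x0 (pblock P w') == 0) = (dist_set e w (pblock P w') == 0).
  by rewrite !dist_set_eq0 (partition_pblock_mem partP Px0w).
move: near_x0 near_w.
by case: (dist_set _ _ _) => [|[|]] //; case: (dist_set _ _ _) => [|[|]].
Qed.

Lemma clique_partition_dim_gt :
  connected_graph e -> ~ complete_graph e -> e a b -> #|W| < partition_dim e.
Proof.
move=> conn_e ncompl eab.
have [v vW] : exists v, v \notin W.
  apply/existsP; apply: contra_notT ncompl => /existsPn allW x y xy.
  by rewrite edge_in ?(negbNE (allW _)).
have [x [y [xW yW exy]]] := connected_boundary_edge conn_e aW vW.
have ay : e a y by rewrite -(edge_out xW yW).
apply/(@Order.TotalTheory.bigmin_gtP _ nat); split.
  rewrite ltEnat /= -(cardsC W) -addn1 leq_add2l card_gt0.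
  by apply/set0Pn; exists v; rewrite inE.
move=> P locP; rewrite ltEnat /= ltn_neqAle (locating_twin_set_card e_irr locP tW) andbT.
exact: clique_locating_card_neq ay locP.
Qed.

End MaxTwinSet.

Lemma noncomplete_nonedge (T : finType) (e : rel T) :
  ~ complete_graph e -> exists u v, u != v /\ ~~ e u v.
Proof.
move=> ncompl; have /existsP[u /existsP[v]] : [exists u, exists v, (u != v) && ~~ e u v].
  apply: contra_notT ncompl => /existsPn nuv u v uv.
  by have /existsPn/(_ v) := nuv u; rewrite uv negbK.
by case/andP=> uv nuv; exists u, v.
Qed.

Lemma max_twin_set_dichotomy (T : finType) (e : rel T) (W : {set T}) :
  simple_graph e -> connected_graph e -> ~ complete_graph e ->
  #|T| < 2 * twin_number e -> twin_set e W -> #|W| = twin_number e ->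
  [/\ induced_edgeless e W, ~ induced_complete e W & partition_dim e = #|W|] \/
  [/\ induced_complete e W, ~ induced_edgeless e W, #|W| < partition_dim e
    & 2 * partition_dim e <= #|T| + #|W|].
Proof.
move=> [e_irr e_sym] conn_e ncompl n_lt tW cW.
have [u [v [uv _]]] := noncomplete_nonedge ncompl.
have n_gt1 : 1 < #|T| by apply/card_gt1P; exists u, v.
have /card_gt1P[a [b [aW bW ab]]] : 1 < #|W| by lia.
have small_compl : #|~: W| < #|W| by have := cardsC W; lia.
have edges := twin_set_edge_in e_irr e_sym tW aW bW ab.
have [eab|nab] := boolP (e a b); [right|left]; split.
- by move=> x y xW yW xy; rewrite edges.
- by move/(_ a b aW bW); rewrite eab.
- exact: clique_partition_dim_gt e_irr e_sym tW aW bW ab conn_e ncompl eab.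
- exact: clique_partition_dim_le e_irr e_sym tW cW aW bW ab small_compl eab.
- by move=> x y xW yW; have [->|xy] := eqVneq x y; rewrite ?e_irr ?edges.
- by move/(_ a b aW bW ab); apply/negP.
- apply/eqP; rewrite eqn_leq (twin_set_card_le_partition_dim e_irr tW) andbT.
  exact: edgeless_partition_dim e_irr e_sym tW cW aW bW ab small_compl nab.
Qed.

Theorem theorem18 (T : finType) (e : rel T) :
  simple_graph e -> connected_graph e ->
  ~ complete_graph e ->
  #|T| < 2 * twin_number e ->
  twin_number e <= partition_dim e /\
  2 * partition_dim e <= #|T| + twin_number e /\
  (forall W : {set T}, twin_set e W -> #|W| = twin_number e ->
     (partition_dim e = twin_number e <-> induced_edgeless e W) /\
     ((twin_number e < partition_dim e /\ 2 * partition_dim e <= #|T| + twin_number e)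
        <-> induced_complete e W)).
Proof.
move=> simple_e conn_e ncompl n_lt.
have dichotomy := max_twin_set_dichotomy simple_e conn_e ncompl n_lt.
have [u [_ [_ _]]] := noncomplete_nonedge ncompl.
have n_gt0 : 0 < #|T| by apply/card_gt0P; exists u.
have [W0 [tW0 cW0]] := exists_max_twin_set simple_e.1 simple_e.2 n_gt0.
split; last split.
- by case: (dichotomy W0 tW0 cW0) => [[_ _ ->]|[_ _ /ltnW]]; rewrite cW0.
- case: (dichotomy W0 tW0 cW0) => [[_ _ pdW]|[_ _ _]]; rewrite -cW0 //.
  by rewrite pdW mul2n -addnn leq_add2r max_card.
move=> W tW cW; rewrite -cW.
case: (dichotomy W tW cW) => [[edgeless nclique pdW]|[clique nedgeless pd_gt pd_le]].
  by rewrite pdW ltnn; split; split => // [[]].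
by split; split => // pdW; move: pd_gt; rewrite pdW ltnn.
Qed.
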